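(* Let $n\ge 1$. The maximum number of nonzero entries of an $n\times n\times n$ ASHM equals $m_n=\frac{n(n^2+2)}{3}$, and this maximum is attained by the diamond ASHM $\mathfrak D_n=[F_n^1,F_n^2,\ldots,F_n^n]$. Moreover, for each $k\in\{1,\ldots,n\}$: (i) if $A$ is an $n\times n$ ASM for which there exist $n\times n$ ASMs $A_1,\ldots,A_{k-1},A_{k+1},\ldots,A_n$ such that $[A_1,\ldots,A_{k-1},A,A_{k+1},\ldots,A_n]$ is an ASHM, then $A$ has at most as many nonzero entries as $F_n^k$; (ii) more precisely, for each such $A$ and each $i\in\{1,\ldots,n\}$, the number of nonzeros in row $i$ (resp. column $i$) of $A$ is at most the number of nonzeros in row $i$ (resp. column $i$) of $F_n^k$.
   Context: An $n\times n$ alternating sign matrix (ASM) is an $n\times n$ matrix with entries in $\{0,1,-1\}$ such that in every row and every column the nonzero entries alternate in sign, beginning and ending with $+1$. An $n\times n\times n$ hypermatrix $A=[a_{ijk}]$ is written $A=[A_1,\ldots,A_n]$ with $A_k=[a_{ijk}]_{i,j}$ its $k$-th horizontal plane. $A$ is an alternating sign hypermatrix (ASHM) if all entries lie in $\{0,\pm1\}$ and in every line (row line: fixed $j,k$; column line: fixed $i,k$; vertical line: fixed $i,j$) the nonzeros alternate in sign beginning and ending with $+1$; equivalently every plane obtained by fixing one index is an ASM. For $1\le k\le n$, $F_n^k=[f_{ij}]$ is the $n\times n$ matrix with $f_{ij}=(-1)^{i+j+k+1}$ if $k+1\le i+j\le 2n+1-k$ and $|i-j|\le k-1$, and $f_{ij}=0$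 otherwise (so $F_n^1=I_n$ and $F_n^n$ is the anti-diagonal permutation matrix; each $F_n^k$ is an ASM). The diamond ASHM is $\mathfrak D_n=[F_n^1,F_n^2,\ldots,F_n^n]$, which is an ASHM. *)

From HB Require Import structures.
From mathcomp Require Import all_boot all_order all_algebra.
Set Implicit Arguments. Unset Strict Implicit. Unset Printing Implicit Defensive.
Import Order.TTheory GRing.Theory Num.Theory.
Local Open Scope ring_scope.

Fixpoint alt_pm (s : seq int) : bool :=
  match s with
  | [::] => false
  | [:: x] => x == 1
  | x :: y :: t => [&& x == 1, y == -1 & alt_pm t]
  end.

Definition asm_line n (f : 'I_n -> int) : bool :=
  [forall x, (f x == 0) || (f x == 1) || (f x == -1)] &&
  alt_pm [seq f x | x <- enum 'I_n & f x != 0].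

Definition is_asm n (A : 'M[int]_n) : bool :=
  [forall i, asm_line (fun j => A i j)] && [forall j, asm_line (fun i => A i j)].

(* An n x n x n hypermatrix A = [A_1, ..., A_n] is given by its horizontal
   planes: H k = A_k, so that a_{ijk} = H k i j. *)
Definition hypermx n := 'I_n -> 'M[int]_n.

Definition is_ashm n (H : hypermx n) : bool :=
  [&& [forall j, forall k, asm_line (fun i => H k i j)],
      [forall i, forall k, asm_line (fun j => H k i j)]
    & [forall i, forall j, asm_line (fun k => H k i j)]].

Definition nnz3 n (H : hypermx n) : nat :=
  #|[set t : 'I_n * 'I_n * 'I_n | H t.2 t.1.1 t.1.2 != 0]|.
Definition nnz n (A : 'M[int]_n) : nat := #|[set t : 'I_n * 'I_n | A t.1 t.2 != 0]|.
Definition nnz_row n (A : 'M[int]_n) (i : 'I_n) : nat := #|[set j | A i j != 0]|.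
Definition nnz_col n (A : 'M[int]_n) (j : 'I_n) : nat := #|[set i | A i j != 0]|.

(* F_n^k, with k 1-based (1 <= k <= n); matrix indices are 0-based,
   so the paper's (i,j) corresponds to our (i.+1, j.+1). *)
Definition Fmx n (k : nat) : 'M[int]_n :=
  \matrix_(i < n, j < n)
    let a := i.+1 in let b := j.+1 in
    if [&& (k.+1 <= a + b)%N, (a + b <= 2 * n + 1 - k)%N,
           (a - b <= k - 1)%N & (b - a <= k - 1)%N]
    then (-1) ^+ (a + b + k + 1) else 0.

Definition diamond n : hypermx n := fun k => Fmx n (k.+1).
Arguments diamond n : clear implicits.

From HB Require Import structures.
From mathcomp Require Import all_boot all_order all_algebra.
From mathcomp Require Import zify lra.
Set Implicit Arguments. Unset Strict Implicit. Unset Printing Implicit Defensive.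
Import Order.TTheory GRing.Theory Num.Theory.

(* Every line of an ASM sums to 1 and all its partial sums lie in {0,1}. So if
   row p of an n x n ASM has a +1 in column j, then column j sums to 1 both over
   the rows 0..p and over the rows p..n-1. Over all columns the first kind of
   partial sums add up to p+1 and the second to n-p, so row p has at most
   min(p+1, n-p) entries +1, hence at most 2 min(p+1, n-p) - 1 nonzeros, a line
   having one more +1 than -1. In an ASHM the row i of the plane A_k is also the
   row k of the ASM obtained by fixing the first index to i, so it obeys both the
   bound for i and the bound for k. The diamond attains all these bounds at once,
   and summing them over i and k gives n(n^2+2)/3. *)

Local Open Scope ring_scope.

Lemma card_set_count (T : finType) (P : pred T) : #|[set x | P x]| = count P (enum T).
Proof. by rewrite enumT cardsE cardE /enum_mem size_filter. Qed.

Lemma card_set_sum (T : finType) (P : pred T) : #|[set x | P x]| = (\sum_x P x)%N.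
Proof. by rewrite -sum1dep_card big_mkcond; apply: eq_bigr => x _; case: (P x). Qed.

Lemma take_enum_ordS n (p : 'I_n) : take p.+1 (enum 'I_n) = rcons (take p (enum 'I_n)) p.
Proof. by rewrite (take_nth p) ?size_enum_ord // nth_ord_enum. Qed.

Lemma filter_iota_interval n lo hi : (lo <= hi < n)%N ->
  [seq x <- iota 0 n | lo <= x <= hi]%N = iota lo (hi - lo).+1.
Proof.
move=> lohin; have lo_le_n : (lo <= n)%N by lia.
rewrite -(subnKC lo_le_n) iotaD filter_cat add0n.
rewrite (@eq_in_filter _ _ pred0) ?filter_pred0 => [|x]; last by rewrite mem_iota /=; lia.
rewrite (@eq_in_filter _ _ (fun x => x <= lo + (hi - lo))%N) => [|x]; last first.
  by rewrite mem_iota /=; lia.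
by rewrite filter_iota_leq //; lia.
Qed.

Lemma card_ord_interval n lo hi : (lo <= hi < n)%N ->
  #|[set x : 'I_n | lo <= x <= hi]%N| = (hi - lo).+1.
Proof.
move=> lohin; rewrite card_set_count.
rewrite -(count_map val (fun x => lo <= x <= hi)%N) val_enum_ord.
by rewrite -size_filter filter_iota_interval // size_iota.
Qed.

Lemma big_nat_ends (F : nat -> nat) m :
  (\sum_(0 <= k < m.+2) F k = F 0 + \sum_(0 <= k < m) F k.+1 + F m.+1)%N.
Proof. by rewrite big_nat_recl // big_nat_recr // addnA. Qed.

Lemma alt_pm_ind (P : seq int -> Prop) :
  P [:: 1] -> (forall s, alt_pm s -> P s -> P [:: 1, -1 & s]) ->
  forall s, alt_pm s -> P s.
Proof.
move=> P1 PS s; have [m] := ubnP (size s).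
elim: m s => // m IH [|x [|y s]] //= size_s; first by move=> /eqP ->.
by case/and3P=> /eqP -> /eqP -> alt_s; apply: PS alt_s (IH _ _ alt_s); lia.
Qed.

Lemma alt_pm_sum s : alt_pm s -> \sum_(x <- s) x = 1.
Proof. by elim/alt_pm_ind=> [|t _ IH]; rewrite ?big_seq1 // !big_cons IH addNKr. Qed.

Lemma alt_pm_prefix_sum u v : alt_pm (u ++ v) -> 0 <= \sum_(x <- u) x <= 1.
Proof.
move Es: (u ++ v) => s alt_s; move: alt_s u v Es.
elim/alt_pm_ind => [|t _ IH] [|x [|y u]] v /=; rewrite ?big_nil ?big_seq1 //.
- by case=> ->.
- by case=> ->.
- by case=> -> -> /IH; rewrite !big_cons addNKr.
Qed.

Lemma alt_pm_size s : alt_pm s -> ((size s).+1 = 2 * count_mem (1 : int) s)%N.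
Proof. by elim/alt_pm_ind=> [|t _ IH] //=; rewrite IH add0n mulnDr. Qed.

Lemma alt_pm_signs lo c m : ~~ odd (lo + c) ->
  alt_pm [seq (-1) ^+ (x + c) | x <- iota lo m.*2.+1].
Proof.
elim: m lo => [|m IH] lo even_lo; first by rewrite /= -signr_odd (negbTE even_lo).
rewrite doubleS /= -signr_odd (negbTE even_lo) -[(-1) ^+ (lo.+1 + c)]signr_odd.
by rewrite addSn /= (negbTE even_lo) !eqxx /=; apply: IH; rewrite !addSn /= negbK.
Qed.

Section AsmLine.
Variables (n : nat) (g : 'I_n -> int).
Hypothesis g_asm : asm_line g.

Let nonzeros := [seq g x | x <- enum 'I_n & g x != 0].

Let alt_nonzeros : alt_pm nonzeros.
Proof. by case/andP: g_asm. Qed.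

Let big_nonzeros r : \sum_(x <- r | g x != 0) g x = \sum_(x <- r) g x.
Proof. by apply: big_rmcond => x /negPn/eqP. Qed.

Lemma asm_line_sum : \sum_i g i = 1.
Proof.
by rewrite -(alt_pm_sum alt_nonzeros) big_map big_filter big_nonzeros big_enum.
Qed.

Lemma asm_line_prefix_sum m : 0 <= \sum_(i <- take m (enum 'I_n)) g i <= 1.
Proof.
have := @alt_pm_prefix_sum [seq g x | x <- take m (enum 'I_n) & g x != 0]
                           [seq g x | x <- drop m (enum 'I_n) & g x != 0].
by rewrite -map_cat -filter_cat cat_take_drop big_map big_filter big_nonzeros; apply.
Qed.

Lemma asm_line_suffix_sum m :
  \sum_(i <- drop m (enum 'I_n)) g i = 1 - \sum_(i <- take m (enum 'I_n)) g i.
Proof.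
have <- : \sum_(i <- enum 'I_n) g i = 1 by rewrite big_enum; exact: asm_line_sum.
by rewrite -{2}(cat_take_drop m (enum 'I_n)) big_cat addrC addKr.
Qed.

Lemma asm_line_one_prefix (p : 'I_n) :
  g p = 1 -> \sum_(i <- take p (enum 'I_n)) g i = 0.
Proof.
move=> gp1; have /andP[prefix_ge0 _] := asm_line_prefix_sum p.
have /andP[_] := asm_line_prefix_sum p.+1.
by rewrite take_enum_ordS -cats1 big_cat big_seq1 /= gp1; lra.
Qed.

Lemma asm_line_one_take (p : 'I_n) :
  g p = 1 -> \sum_(i <- take p.+1 (enum 'I_n)) g i = 1.
Proof.
move=> gp1; rewrite take_enum_ordS -cats1 big_cat big_seq1 /=.
by rewrite asm_line_one_prefix ?gp1 ?add0r.
Qed.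

Lemma asm_line_one_drop (p : 'I_n) :
  g p = 1 -> \sum_(i <- drop p (enum 'I_n)) g i = 1.
Proof. by move=> gp1; rewrite asm_line_suffix_sum asm_line_one_prefix ?subr0. Qed.

Lemma asm_line_nnz : (#|[set x | g x != 0]|.+1 = 2 * #|[set x | g x == 1]|)%N.
Proof.
have size_nonzeros : size nonzeros = count (fun x => g x != 0) (enum 'I_n).
  by rewrite size_map size_filter.
have ones_nonzeros : count_mem 1 nonzeros = count (fun x => g x == 1) (enum 'I_n).
  rewrite count_map count_filter; apply: eq_count => x /=.
  by case: eqP => // ->.
by rewrite !card_set_count -size_nonzeros -ones_nonzeros alt_pm_size.
Qed.

End AsmLine.

Lemma eq_asm_line n (f g : 'I_n -> int) : f =1 g -> asm_line f = asm_line g.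
Proof.
move=> fg; rewrite /asm_line (eq_filter (a2 := fun x => g x != 0)) => [|x].
  by rewrite (eq_map fg); congr (_ && _); apply: eq_forallb => x; rewrite fg.
by rewrite fg.
Qed.

Lemma asm_line_signed_interval n (f : 'I_n -> int) (lo hi c : nat) :
  (lo <= hi < n)%N -> ~~ odd (lo + c) -> ~~ odd (hi + c) ->
  (forall x : 'I_n, f x = if (lo <= x <= hi)%N then (-1) ^+ (x + c) else 0) ->
  asm_line f.
Proof.
move=> lohin even_lo even_hi fE; apply/andP; split.
  apply/forallP => x; rewrite fE; case: ifP => _; rewrite ?eqxx ?orbT //.
  by rewrite -signr_odd; case: odd; rewrite ?eqxx ?orbT.
have -> : [seq f x | x <- enum 'I_n & f x != 0] =
          [seq (-1) ^+ (x + c) | x <- [seq x <- iota 0 n | lo <= x <= hi]%N].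
  rewrite -val_enum_ord filter_map -map_comp.
  rewrite (@eq_filter _ (fun x => f x != 0) (preim val (fun x => lo <= x <= hi)%N))
    => [|x]; last first.
    by rewrite fE /=; case: ifP; rewrite ?signr_eq0.
  by apply/eq_in_map => x; rewrite mem_filter /= fE => /andP[-> _].
rewrite filter_iota_interval //.
have -> : (hi - lo).+1 = ((hi - lo)./2).*2.+1 by lia.
exact: alt_pm_signs.
Qed.

(* 2 min(p+1, n-p) - 1 for 0-based p < n, i.e. the paper's 2 min(i, n+1-i) - 1. *)
Definition asm_max_nnz n p := (2 * minn p (n - p.+1)).+1.

Section AsmRow.
Variables (n : nat) (M : 'I_n -> 'I_n -> int).
Hypothesis M_rows : forall i, asm_line (fun j => M i j).
Hypothesis M_cols : forall j, asm_line (fun i => M i j).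

Lemma card_col_sum_eq1 (r : seq 'I_n) :
  (forall j, 0 <= \sum_(i <- r) M i j <= 1) ->
  #|[set j | \sum_(i <- r) M i j == 1]| = size r.
Proof.
move=> sum01; apply/eqP; rewrite -(eqr_nat int) card_set_sum natr_sum.
(* Each column partial sum is 0 or 1, so it is the indicator of being 1; summed
   over all columns it counts every row of [r] once, since rows sum to 1. *)
have -> : \sum_j ((\sum_(i <- r) M i j == 1) : nat)%:R =
          \sum_j \sum_(i <- r) M i j :> int.
  by apply: eq_bigr => j _; have := sum01 j; case: eqP => [-> //|]; lia.
rewrite exchange_big /= (eq_bigr (fun=> 1%:R)) => [|i _]; last exact: asm_line_sum.
by rewrite -natr_sum sum1_size.
Qed.

Lemma asm_row_ones_le (p : 'I_n) : (#|[set j | M p j == 1]| <= minn p.+1 (n - p))%N.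
Proof.
have ones_le (r : seq 'I_n) :
    (forall j, 0 <= \sum_(i <- r) M i j <= 1) ->
    (forall j, M p j = 1 -> \sum_(i <- r) M i j = 1) ->
    (#|[set j | M p j == 1]| <= size r)%N.
  move=> sum01 sum1; rewrite -(card_col_sum_eq1 sum01).
  by apply/subset_leq_card/subsetP => j; rewrite !inE => /eqP/sum1 ->.
rewrite leq_min; apply/andP; split.
  have := ones_le _ (fun j => asm_line_prefix_sum (M_cols j) p.+1)
                    (fun j => @asm_line_one_take _ _ (M_cols j) p).
  by rewrite size_takel ?size_enum_ord.
have suffix01 j : 0 <= \sum_(i <- drop p (enum 'I_n)) M i j <= 1.
  have /andP[? ?] := asm_line_prefix_sum (M_cols j) p.
  by rewrite asm_line_suffix_sum //; apply/andP; split; lra.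
have := ones_le _ suffix01 (fun j => @asm_line_one_drop _ _ (M_cols j) p).
by rewrite size_drop size_enum_ord.
Qed.

Lemma asm_row_nnz_le (p : 'I_n) : (#|[set j | M p j != 0]| <= asm_max_nnz n p)%N.
Proof.
have := asm_line_nnz (M_rows p); have := asm_row_ones_le p; have := ltn_ord p.
rewrite /asm_max_nnz; lia.
Qed.

End AsmRow.

Lemma nnz_sum_row n (A : 'M[int]_n) : nnz A = (\sum_i nnz_row A i)%N.
Proof.
rewrite /nnz card_set_sum -(pair_bigA _ (fun i j => (A i j != 0 : nat))) /=.
by apply: eq_bigr => i _; rewrite /nnz_row card_set_sum.
Qed.

Lemma nnz3_sum n (H : hypermx n) : nnz3 H = (\sum_k nnz (H k))%N.
Proof.
rewrite /nnz3 card_set_sum.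
rewrite -(pair_bigA _ (fun ij k => (H k ij.1 ij.2 != 0 : nat))) exchange_big /=.
by apply: eq_bigr => k _; rewrite /nnz card_set_sum.
Qed.

Section AshmNnz.
Variables (n : nat) (H : hypermx n).
Hypothesis H_ashm : is_ashm H.

Let row_line j k : asm_line (fun i => H k i j).
Proof. by case/and3P: H_ashm => /forallP/(_ j)/forallP/(_ k). Qed.

Let col_line i k : asm_line (fun j => H k i j).
Proof. by case/and3P: H_ashm => _ /forallP/(_ i)/forallP/(_ k). Qed.

Let vertical_line i j : asm_line (fun k => H k i j).
Proof. by case/and3P: H_ashm => _ _ /forallP/(_ i)/forallP/(_ j). Qed.

Lemma ashm_nnz_row_le k i :
  (nnz_row (H k) i <= minn (asm_max_nnz n i) (asm_max_nnz n k))%N.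
Proof.
rewrite leq_min (asm_row_nnz_le (col_line^~ k) (row_line^~ k)).
exact: (@asm_row_nnz_le _ (fun k j => H k i j) (col_line i) (vertical_line i)).
Qed.

Lemma ashm_nnz_col_le k j :
  (nnz_col (H k) j <= minn (asm_max_nnz n j) (asm_max_nnz n k))%N.
Proof.
rewrite leq_min (@asm_row_nnz_le _ (fun j i => H k i j) (row_line^~ k) (col_line^~ k)).
exact: (@asm_row_nnz_le _ (fun k i => H k i j) (row_line j) (vertical_line^~ j)).
Qed.

End AshmNnz.

(* The 0-based entry a_{ijk} of the diamond. Its support is cut out by the
   triangle inequalities, so it is invariant under permuting i, j, k. *)
Definition diamond_entry n i j k : int :=
  if [&& i <= j + k, j <= k + i, k <= i + j & (i + j + k).+2 <= 2 * n]%N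
  then (-1) ^+ (i + j + k) else 0.

Lemma diamond_entry_rot n i j k : diamond_entry n i j k = diamond_entry n j k i.
Proof.
rewrite /diamond_entry (addnC (j + k)) addnA; congr (if _ then _ else _).
by apply/idP/idP => /and4P[*]; apply/and4P; split; lia.
Qed.

Lemma FmxE n (k i j : 'I_n) : Fmx n k.+1 i j = diamond_entry n i j k.
Proof.
rewrite mxE /diamond_entry /=.
have -> : [&& k.+2 <= i.+1 + j.+1, i.+1 + j.+1 <= 2 * n + 1 - k.+1,
           i.+1 - j.+1 <= k.+1 - 1 & j.+1 - i.+1 <= k.+1 - 1]%N =
          [&& i <= j + k, j <= k + i, k <= i + j & (i + j + k).+2 <= 2 * n]%N.
  by apply/idP/idP => /and4P[*]; apply/and4P; split; lia.
by case: ifP => // _; rewrite -signr_odd -[RHS]signr_odd; congr (_ ^+ _); lia.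
Qed.

Lemma diamond_entryE n a b x : (a < n)%N -> (b < n)%N ->
  diamond_entry n a b x =
  if (maxn (a - b) (b - a) <= x <= minn (a + b) (2 * n - 2 - (a + b)))%N
  then (-1) ^+ (x + (a + b)) else 0.
Proof.
move=> a_lt_n b_lt_n; rewrite /diamond_entry [(a + b + x)%N]addnC.
congr (if _ then _ else _).
by apply/idP/idP => [/and4P[*]|/andP[*]]; [apply/andP|apply/and4P]; split; lia.
Qed.

Lemma diamond_line_asm n (a b : 'I_n) : asm_line (fun x : 'I_n => diamond_entry n a b x).
Proof.
have [a_lt_n b_lt_n] := (ltn_ord a, ltn_ord b).
apply: (@asm_line_signed_interval _ _ (maxn (a - b) (b - a))
         (minn (a + b) (2 * n - 2 - (a + b))) (a + b)); try lia.
by move=> x; rewrite diamond_entryE.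
Qed.

Lemma diamond_line_nnz n (a b : 'I_n) :
  #|[set x : 'I_n | diamond_entry n a b x != 0]| =
  minn (asm_max_nnz n a) (asm_max_nnz n b).
Proof.
have [a_lt_n b_lt_n] := (ltn_ord a, ltn_ord b).
have -> : [set x : 'I_n | diamond_entry n a b x != 0] =
          [set x : 'I_n | maxn (a - b) (b - a) <= x <=
                          minn (a + b) (2 * n - 2 - (a + b))]%N.
  by apply/setP => x; rewrite !inE diamond_entryE //; case: ifP; rewrite ?signr_eq0.
by rewrite card_ord_interval /asm_max_nnz; lia.
Qed.

Lemma diamond_ashm n : is_ashm (diamond n).
Proof.
apply/and3P; split; apply/forallP => a; apply/forallP => b.
- rewrite (@eq_asm_line _ _ (fun x => diamond_entry n a b x)) ?diamond_line_asm // => i.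
  by rewrite /diamond FmxE diamond_entry_rot.
- rewrite (@eq_asm_line _ _ (fun x => diamond_entry n b a x)) ?diamond_line_asm // => j.
  by rewrite /diamond FmxE diamond_entry_rot diamond_entry_rot.
- rewrite (@eq_asm_line _ _ (fun x => diamond_entry n a b x)) ?diamond_line_asm // => k.
  by rewrite /diamond FmxE.
Qed.

Lemma Fmx_nnz_row n (k i : 'I_n) :
  nnz_row (Fmx n k.+1) i = minn (asm_max_nnz n i) (asm_max_nnz n k).
Proof.
rewrite /nnz_row minnC -diamond_line_nnz; apply: eq_card => j.
by rewrite !inE FmxE diamond_entry_rot diamond_entry_rot.
Qed.

Lemma Fmx_nnz_col n (k j : 'I_n) :
  nnz_col (Fmx n k.+1) j = minn (asm_max_nnz n j) (asm_max_nnz n k).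
Proof.
rewrite /nnz_col -diamond_line_nnz; apply: eq_card => i.
by rewrite !inE FmxE diamond_entry_rot.
Qed.

Definition ashm_max_nnz n :=
  (\sum_(0 <= k < n) \sum_(0 <= i < n) minn (asm_max_nnz n i) (asm_max_nnz n k))%N.

(* Peel off the outer frame of the (n+2) x (n+2) table of minima: the frame
   entries are 1 and the inner entries are those of the n x n table plus 2. *)
Lemma ashm_max_nnzSS n : ashm_max_nnz n.+2 = (ashm_max_nnz n + 2 * n ^ 2 + 4 * n + 4)%N.
Proof.
have border k : (k == 0) || (k == n.+1) ->
    (\sum_(0 <= i < n.+2) minn (asm_max_nnz n.+2 i) (asm_max_nnz n.+2 k) = n.+2)%N.
  move=> k_border; rewrite (eq_big_nat _ _ (F2 := fun=> 1%N)) => [|i /andP[_ lt_i]].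
    by rewrite sum_nat_const_nat subn0 muln1.
  by rewrite /asm_max_nnz; lia.
have interior k : (k < n)%N ->
    (\sum_(0 <= i < n.+2) minn (asm_max_nnz n.+2 i) (asm_max_nnz n.+2 k.+1) =
     2 * n.+1 + \sum_(0 <= i < n) minn (asm_max_nnz n i) (asm_max_nnz n k))%N.
  move=> lt_k; rewrite big_nat_ends.
  rewrite (eq_big_nat _ _
    (F2 := fun i => minn (asm_max_nnz n i) (asm_max_nnz n k) + 2))%N; last first.
    by move=> i /andP[_ lt_i]; rewrite /asm_max_nnz; lia.
  by rewrite big_split sum_nat_const_nat /= /asm_max_nnz; lia.
rewrite /ashm_max_nnz big_nat_ends !border ?eqxx ?orbT //.
rewrite (eq_big_nat _ _ (F2 := fun k => 2 * n.+1 +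
           \sum_(0 <= i < n) minn (asm_max_nnz n i) (asm_max_nnz n k)))%N;
  last by move=> k /andP[_ /interior].
by rewrite big_split sum_nat_const_nat /=; lia.
Qed.

Lemma ashm_max_nnzE n : (3 * ashm_max_nnz n = n * (n ^ 2 + 2))%N.
Proof.
suff: (3 * ashm_max_nnz n = n * (n ^ 2 + 2))%N /\
      (3 * ashm_max_nnz n.+1 = n.+1 * (n.+1 ^ 2 + 2))%N by case.
elim: n => [|n [IHn IHn1]]; first by rewrite /ashm_max_nnz !big_nat1 big_geq.
by split=> //; rewrite ashm_max_nnzSS; nia.
Qed.

Theorem mainTheorem2 (n : nat) (hn : (1 <= n)%N) :
  [/\ (forall H : hypermx n, is_ashm H -> (nnz3 H <= n * (n ^ 2 + 2) %/ 3)%N),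
      is_ashm (diamond n),
      nnz3 (diamond n) = (n * (n ^ 2 + 2) %/ 3)%N
    & forall (k : 'I_n) (A : 'M[int]_n),
        is_asm A ->
        (exists H : hypermx n, is_ashm H /\ H k = A) ->
        (nnz A <= nnz (Fmx n k.+1))%N /\
        (forall i : 'I_n,
            (nnz_row A i <= nnz_row (Fmx n k.+1) i)%N /\
            (nnz_col A i <= nnz_col (Fmx n k.+1) i)%N)].
Proof.
have m_nE : (n * (n ^ 2 + 2) %/ 3 =
             \sum_(k < n) \sum_(i < n) minn (asm_max_nnz n i) (asm_max_nnz n k))%N.
  rewrite -ashm_max_nnzE mulKn // /ashm_max_nnz big_mkord.
  by apply: eq_bigr => k _; rewrite big_mkord.
split.
- move=> H H_ashm; rewrite nnz3_sum m_nE; apply: leq_sum => k _.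
  by rewrite nnz_sum_row; apply: leq_sum => i _; exact: ashm_nnz_row_le.
- exact: diamond_ashm.
- rewrite nnz3_sum m_nE; apply: eq_bigr => k _.
  by rewrite nnz_sum_row; apply: eq_bigr => i _; exact: Fmx_nnz_row.
- move=> k A _ [H [H_ashm <-]]; split=> [|i].
    by rewrite !nnz_sum_row; apply: leq_sum => i _; rewrite Fmx_nnz_row ashm_nnz_row_le.
  by rewrite Fmx_nnz_row Fmx_nnz_col ashm_nnz_row_le ?ashm_nnz_col_le.
Qed.
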